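(* Let $(u,m)$ be a pair of smooth (classical) solutions to the system \[ \begin{cases} u_t + \frac{\sigma^2}{2} u_{xx} - ru + G(u_x,m)^2 = 0, & 0<t<T,\ 0<x<L,\\ m_t - \frac{\sigma^2}{2} m_{xx} - \{G(u_x,m)m\}_x = 0, & 0<t<T,\ 0<x<L,\\ m(0,x)=m_0(x),\quad u(T,x)=u_T(x), & 0\le x\le L,\\ u_x(t,0)=u_x(t,L)=0, & 0\le t\le T,\\ \frac{\sigma^2}{2} m_x(t,x) + G(u_x,m)m(t,x) = 0, & 0\le t\le T,\ x\in\{0,L\}, \end{cases} \] where $G(u_x,m)(t,x) := \frac12\left(b + c\int_0^L u_x(t,y)m(t,y)\,dy - u_x(t,x)\right)$. Then for all $t\in[0,T]$, $m(t,\cdot)$ is a probability density on $[0,L]$, and $u(t,x)\ge 0$ for all $t\in[0,T]$, $x\in[0,L]$. Moreover, there is a constant $C>0$ depending only on the data such that \[ \int_0^T\int_0^L m\,u_x^2\,dx\,dt \le C. \]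
   Context: Standing setting: $L,T,\sigma,r>0$ are constants, $\epsilon>0$, and $b=\frac{2}{2+\epsilon}$, $c=\frac{\epsilon}{2+\epsilon}$. The data satisfy: $u_T,m_0\in C^{2+\gamma}([0,L])$ for some $\gamma>0$; $u_T'(0)=u_T'(L)=0$ and $m_0(0)=m_0'(0)=m_0(L)=m_0'(L)=0$; $m_0$ is a probability density on $[0,L]$; $u_T\ge 0$. ''Depending only on the data'' means depending only on $u_T,m_0,L,T,\sigma,r,\epsilon$. *)

From Stdlib Require Import Reals.
From Coquelicot Require Import Coquelicot.
Open Scope R_scope.

Definition in_cc (a b x : R) : Prop := a <= x <= b.
Definition rect (T L : R) (p : R * R) : Prop := in_cc 0 T (fst p) /\ in_cc 0 L (snd p).

Definition pt (w : R -> R -> R) (t x : R) : R := Derive (fun s => w s x) t.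
Definition px (w : R -> R -> R) (t x : R) : R := Derive (fun y => w t y) x.
Definition pxx (w : R -> R -> R) (t x : R) : R := Derive (fun y => px w t y) x.

Definition cont_on_rect (T L : R) (f : R -> R -> R) : Prop :=
  forall p : R * R, rect T L p ->
    filterlim (fun q : R * R => f (fst q) (snd q)) (within (rect T L) (locally p))
              (locally (f (fst p) (snd p))).

Definition C12_rect (T L : R) (w : R -> R -> R) : Prop :=
  (forall t x, rect T L (t, x) ->
     ex_derive (fun s => w s x) t /\
     ex_derive (fun y => w t y) x /\
     ex_derive (fun y => px w t y) x) /\
  cont_on_rect T L w /\ cont_on_rect T L (pt w) /\
  cont_on_rect T L (px w) /\ cont_on_rect T L (pxx w).

Definition C2gamma (L gamma : R) (f : R -> R) : Prop :=
  (forall x, in_cc 0 L x -> ex_derive f x /\ ex_derive (Derive f) x) /\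
  exists K : R, forall x y, in_cc 0 L x -> in_cc 0 L y ->
    Rabs (Derive_n f 2 x - Derive_n f 2 y) <= K * Rpower (Rabs (x - y)) gamma.

Definition prob_density (L : R) (f : R -> R) : Prop :=
  (forall x, in_cc 0 L x -> 0 <= f x) /\ RInt f 0 L = 1.

Definition b_of (eps : R) : R := 2 / (2 + eps).
Definition c_of (eps : R) : R := eps / (2 + eps).
Definition Gc (eps L : R) (u m : R -> R -> R) (t x : R) : R :=
  / 2 * (b_of eps + c_of eps * RInt (fun y => px u t y * m t y) 0 L - px u t x).

Definition mfg_solution (L T sigma r eps : R) (uT m0 : R -> R) (u m : R -> R -> R) : Prop :=
  C12_rect T L u /\ C12_rect T L m /\
  (forall t x, 0 < t < T -> 0 < x < L ->
     pt u t x + sigma ^ 2 / 2 * pxx u t x - r * u t x + (Gc eps L u m t x) ^ 2 = 0) /\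
  (forall t x, 0 < t < T -> 0 < x < L ->
     pt m t x - sigma ^ 2 / 2 * pxx m t x
       - Derive (fun y => Gc eps L u m t y * m t y) x = 0) /\
  (forall x, in_cc 0 L x -> m 0 x = m0 x /\ u T x = uT x) /\
  (forall t, in_cc 0 T t -> px u t 0 = 0 /\ px u t L = 0) /\
  (forall t x, in_cc 0 T t -> (x = 0 \/ x = L) ->
     sigma ^ 2 / 2 * px m t x + Gc eps L u m t x * m t x = 0).

(* Mass is conserved because the Fokker-Planck equation is in divergence form with
   zero flux through x = 0, L.  Nonnegativity of m and u comes from the truncation
   neg4 s = min(s,0)^4: an integration by parts and Young's inequality give
   d/dt int neg4(m) <= K int neg4(m), with K controlled by a bound on G, so
   int neg4(m) vanishes for all times by Gronwall; for u, the Hamilton-Jacobi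
   equation and the Neumann condition make int neg4(u) nondecreasing, and it
   vanishes at t = T.  Finally E(t) = int u m satisfies
   E' = int m (r u + (u_x^2 - B^2) / 4) with B = b + c int u_x m; since m(t) is a
   probability density, convexity and Jensen give B^2 <= b + c int m u_x^2, hence
   4 E' >= b (int m u_x^2 - 1), and integrating over [0, T] with
   0 <= E <= max u_T bounds int int m u_x^2 by 4 max u_T / b + T. *)

From Stdlib Require Import Reals Lra Psatz.
From Coquelicot Require Import Coquelicot.
Open Scope R_scope.

(** * Calculus on an interval *)

Lemma ball_Rabs (x e y : R) : ball x e y <-> Rabs (y - x) < e.
Proof. reflexivity. Qed.

Lemma locally_open_interval a b x : a < x < b -> locally x (fun y => a < y < b).
Proof. apply (open_and _ _ (open_gt a) (open_lt b)). Qed.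

Lemma is_derive_Rplus (f g : R -> R) x df dg : is_derive f x df -> is_derive g x dg ->
  is_derive (fun y => f y + g y) x (df + dg).
Proof. intros Hf Hg. exact (is_derive_plus f g x df dg Hf Hg). Qed.

Lemma is_derive_Rminus (f g : R -> R) x df dg : is_derive f x df -> is_derive g x dg ->
  is_derive (fun y => f y - g y) x (df - dg).
Proof. intros Hf Hg. exact (is_derive_minus f g x df dg Hf Hg). Qed.

Lemma is_derive_Rmult (f g : R -> R) x df dg : is_derive f x df -> is_derive g x dg ->
  is_derive (fun y => f y * g y) x (df * g x + f x * dg).
Proof. intros Hf Hg. exact (is_derive_mult f g x df dg Hf Hg Rmult_comm). Qed.

Lemma is_derive_Rcomp (f g : R -> R) x df dg : is_derive f (g x) df -> is_derive g x dg ->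
  is_derive (fun y => f (g y)) x (df * dg).
Proof. intros Hf Hg. rewrite Rmult_comm. exact (is_derive_comp f g x df dg Hf Hg). Qed.

Lemma continuity_pt_of_is_derive (f df : R -> R) :
  (forall s, is_derive f s (df s)) -> forall s, continuity_pt f s.
Proof.
  intros Hf s. apply continuity_pt_filterlim.
  apply (ex_derive_continuous (K := R_AbsRing) (V := R_NormedModule)). eexists. apply Hf.
Qed.

Lemma RInt_Rplus (f g : R -> R) a b : ex_RInt f a b -> ex_RInt g a b ->
  RInt (fun x => f x + g x) a b = RInt f a b + RInt g a b.
Proof. intros. now apply (RInt_plus (V := R_CompleteNormedModule)). Qed.

Lemma RInt_Rmult_l (f : R -> R) k a b : ex_RInt f a b ->
  RInt (fun x => k * f x) a b = k * RInt f a b.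
Proof. intros. now apply (RInt_scal (V := R_CompleteNormedModule)). Qed.

Lemma RInt_Ropp (f : R -> R) a b : ex_RInt f a b -> RInt (fun x => - f x) a b = - RInt f a b.
Proof. intros. now apply (RInt_opp (V := R_CompleteNormedModule)). Qed.

Lemma RInt_const_0 a b : RInt (fun _ => 0) a b = 0.
Proof. rewrite RInt_const. exact (Rmult_0_r (b - a)). Qed.

Lemma RInt_is_derive (F g : R -> R) a b : a <= b ->
  (forall x, a <= x <= b -> is_derive F x (g x)) ->
  (forall x, a <= x <= b -> continuous g x) -> RInt g a b = F b - F a.
Proof.
  intros Hab HF Hg. apply is_RInt_unique, (is_RInt_derive F g);
    rewrite Rmin_left, Rmax_right by lra; assumption.
Qed.

Lemma nondecreasing_of_derive (g dg : R -> R) a b : a <= b ->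
  (forall x, a <= x <= b -> continuous g x) ->
  (forall x, a < x < b -> is_derive g x (dg x)) ->
  (forall x, a < x < b -> 0 <= dg x) -> g a <= g b.
Proof.
  intros Hab Hc Hd Hpos.
  (* [Rmax 0 dg] agrees with [dg] inside and is nonnegative at the endpoints as well *)
  destruct (MVT_gen g a b (fun x => Rmax 0 (dg x))) as [c [_ E]];
    rewrite ?Rmin_left, ?Rmax_right in * by lra.
  - intros x Hx. rewrite Rmax_right by now apply Hpos. now apply Hd.
  - intros x Hx. now apply continuity_pt_filterlim, Hc.
  - pose proof (Rmax_l 0 (dg c)). nra.
Qed.

Lemma constant_of_derive_0 (g : R -> R) a b : a <= b ->
  (forall x, a <= x <= b -> continuous g x) ->
  (forall x, a < x < b -> is_derive g x 0) -> g b = g a.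
Proof.
  intros Hab Hc Hd.
  destruct (MVT_gen g a b (fun _ => 0)) as [c [_ E]]; rewrite ?Rmin_left, ?Rmax_right in * by lra.
  - exact Hd.
  - intros x Hx. now apply continuity_pt_filterlim, Hc.
  - lra.
Qed.

Lemma gronwall_nonpos (g dg : R -> R) K a b :
  (forall t, a <= t <= b -> continuous g t) ->
  (forall t, a < t < b -> is_derive g t (dg t)) ->
  (forall t, a < t < b -> dg t <= K * g t) ->
  g a <= 0 -> forall t, a <= t <= b -> g t <= 0.
Proof.
  intros Hc Hd Hle Ha t Ht.
  (* the integrating factor: [exp (- K s) * g s] is nonincreasing *)
  assert (Hmon : -1 * (exp (- K * a) * g a) <= -1 * (exp (- K * t) * g t)).
  { apply (nondecreasing_of_derive (fun s => -1 * (exp (- K * s) * g s))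
             (fun s => exp (- K * s) * (K * g s - dg s))); try lra.
    - intros s Hs. apply (continuous_scal_r (K := R_AbsRing) (V := R_NormedModule) (-1)).
      apply (continuous_mult (K := R_AbsRing) (fun s => exp (- K * s)) g); [|apply Hc; lra].
      apply (ex_derive_continuous (K := R_AbsRing) (V := R_NormedModule)). auto_derive. auto.
    - intros s Hs.
      assert (He : is_derive (fun s => exp (- K * s)) s (- K * exp (- K * s)))
        by (auto_derive; [easy | ring]).
      replace (exp (- K * s) * (K * g s - dg s))
        with (-1 * (- K * exp (- K * s) * g s + exp (- K * s) * dg s)) by ring.
      apply is_derive_scal, (is_derive_Rmult (fun s => exp (- K * s)) g);
        [exact He | apply Hd; lra].
    - intros s Hs. apply Rmult_le_pos; [left; apply exp_pos|]. specialize (Hle s ltac:(lra)). lra. }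
  pose proof (exp_pos (- K * a)). pose proof (exp_pos (- K * t)). nra.
Qed.

Lemma RInt_le_of_derive_ge (g dg k : R -> R) a b : a <= b ->
  (forall x, a <= x <= b -> continuous g x) ->
  (forall x, a < x < b -> is_derive g x (dg x)) ->
  (forall x, continuous k x) ->
  (forall x, a < x < b -> k x <= dg x) -> RInt k a b <= g b - g a.
Proof.
  intros Hab Hc Hd Hk Hle.
  assert (HK : forall x, is_derive (fun y => RInt k a y) x (k x)).
  { intros x. apply (is_derive_RInt k _ a); [|apply Hk].
    apply filter_forall. intros y. apply (RInt_correct (V := R_CompleteNormedModule)).
    apply (ex_RInt_continuous (V := R_CompleteNormedModule)). intros; apply Hk. }
  assert (Hmon : g a - RInt k a a <= g b - RInt k a b).
  { apply (nondecreasing_of_derive (fun x => g x - RInt k a x) (fun x => dg x - k x)); auto.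
    - intros x Hx. apply (continuous_minus (K := R_AbsRing) (V := R_NormedModule)); [now apply Hc|].
      apply (ex_derive_continuous (K := R_AbsRing) (V := R_NormedModule)). eexists. apply HK.
    - intros x Hx. apply is_derive_Rminus; [now apply Hd | apply HK].
    - intros x Hx. specialize (Hle x Hx). lra. }
  rewrite RInt_point in Hmon. unfold zero in Hmon; simpl in Hmon. lra.
Qed.

Lemma RInt_gt_0_of_point (g : R -> R) a b x0 : a <= x0 <= b -> a < b ->
  (forall x, a <= x <= b -> continuous g x) ->
  (forall x, a <= x <= b -> 0 <= g x) -> 0 < g x0 -> 0 < RInt g a b.
Proof.
  intros Hx0 Hab Hc Hpos Hgx0.
  assert (Hhalf : 0 < g x0 / 2) by lra.
  destruct (proj1 (filterlim_locally _ _) (Hc x0 Hx0) (mkposreal _ Hhalf)) as [d Hd].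
  (* [g > g x0 / 2] on a nondegenerate interval [al, be] around [x0] inside [a, b] *)
  set (al := Rmax a (x0 - d / 2)). set (be := Rmin b (x0 + d / 2)).
  assert (Hd0 := cond_pos d).
  assert (Hal : a <= al <= x0 /\ x0 - d / 2 <= al) by (unfold al, Rmax; destruct Rle_dec; lra).
  assert (Hbe : x0 <= be <= b /\ be <= x0 + d / 2) by (unfold be, Rmin; destruct Rle_dec; lra).
  assert (Hab' : al < be) by (unfold al, be, Rmax, Rmin; repeat destruct Rle_dec; lra).
  assert (Hex : forall u v, a <= u <= v -> v <= b -> ex_RInt g u v).
  { intros u v Hu Hv. apply (ex_RInt_continuous (V := R_CompleteNormedModule)).
    rewrite Rmin_left, Rmax_right by lra. intros; apply Hc; lra. }
  rewrite <- (RInt_Chasles (V := R_CompleteNormedModule) g a al b),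
          <- (RInt_Chasles (V := R_CompleteNormedModule) g al be b) by (apply Hex; lra).
  assert (0 <= RInt g a al) by (apply RInt_ge_0; [lra | apply Hex; lra | intros; apply Hpos; lra]).
  assert (0 <= RInt g be b) by (apply RInt_ge_0; [lra | apply Hex; lra | intros; apply Hpos; lra]).
  assert (0 < RInt g al be).
  { apply RInt_gt_0; [exact Hab' | | intros; apply Hc; lra].
    intros x Hx. assert (Hball : ball x0 d x) by (apply ball_Rabs, Rabs_def1; lra).
    specialize (Hd x Hball). apply ball_Rabs, Rabs_def2 in Hd.
    unfold minus, plus, opp in Hd; simpl in Hd. lra. }
  unfold plus; simpl. lra.
Qed.

Lemma RInt_sq_le_density (f p : R -> R) a b : a <= b ->
  ex_RInt p a b -> ex_RInt (fun x => f x * p x) a b -> ex_RInt (fun x => p x * f x ^ 2) a b ->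
  (forall x, a < x < b -> 0 <= p x) -> RInt p a b = 1 ->
  RInt (fun x => f x * p x) a b ^ 2 <= RInt (fun x => p x * f x ^ 2) a b.
Proof.
  intros Hab Hp Hfp Hpf2 Hpos Hmass.
  set (A := RInt (fun x => f x * p x) a b).
  assert (Hvar : 0 <= RInt (fun x => p x * f x ^ 2 + (-2 * A * (f x * p x) + A ^ 2 * p x)) a b).
  { apply RInt_ge_0; [exact Hab | |].
    - apply (ex_RInt_plus (V := R_NormedModule)); [exact Hpf2|].
      apply (ex_RInt_plus (V := R_NormedModule));
        apply (ex_RInt_scal (V := R_NormedModule)); assumption.
    - intros x Hx. replace (p x * f x ^ 2 + (-2 * A * (f x * p x) + A ^ 2 * p x))
        with (p x * (f x - A) ^ 2) by ring.
      apply Rmult_le_pos; [now apply Hpos | apply pow2_ge_0]. }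
  rewrite RInt_Rplus, RInt_Rplus, !RInt_Rmult_l, Hmass in Hvar; try assumption.
  - fold A in Hvar. nra.
  - now apply (ex_RInt_scal (V := R_NormedModule)).
  - now apply (ex_RInt_scal (V := R_NormedModule)).
  - apply (ex_RInt_plus (V := R_NormedModule));
      apply (ex_RInt_scal (V := R_NormedModule)); assumption.
Qed.

Lemma sq_convex_comb b c a : 0 <= b -> 0 <= c -> b + c = 1 -> (b + c * a) ^ 2 <= b + c * a ^ 2.
Proof.
  intros Hb Hc Hbc. replace b with (1 - c) by lra.
  assert (0 <= c * (1 - c) * (a - 1) ^ 2) by (apply Rmult_le_pos; [nra | apply pow2_ge_0]).
  nra.
Qed.

(** * The truncation [neg4 s = min(s, 0)^4] *)

Lemma is_derive_Rmin0_pow n s : (2 <= n)%nat ->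
  is_derive (fun s => Rmin s 0 ^ n) s (INR n * Rmin s 0 ^ (n - 1)).
Proof.
  intros Hn. destruct (Rtotal_order s 0) as [Hs | [-> | Hs]].
  - apply (is_derive_ext_loc (fun y => y ^ n)).
    + apply (filter_imp (fun y => s - 1 < y < 0)); [|apply locally_open_interval; lra].
      intros y Hy. now rewrite Rmin_left by lra.
    + rewrite Rmin_left by lra. replace (n - 1)%nat with (Init.Nat.pred n) by lia.
      rewrite <- (Rmult_1_r (INR n)) at 1.
      apply (is_derive_pow (fun y => y)), (is_derive_id (K := R_AbsRing)).
  - rewrite Rmin_right, pow_i, Rmult_0_r by (lra || lia).
    apply is_derive_Reals. intros eps Heps.
    assert (Hd : 0 < Rmin eps 1) by (apply Rmin_glb_lt; lra).
    exists (mkposreal _ Hd). intros h Hh Hsmall. simpl in Hsmall.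
    pose proof (Rmin_l eps 1). pose proof (Rmin_r eps 1).
    rewrite Rplus_0_l, (Rmin_right 0 0), pow_i by (lra || lia).
    destruct (Rle_dec h 0) as [Hneg | Hpos].
    + (* |min(h,0)^n / h| <= |h|^(n-1) <= |h| for |h| < 1 *)
      rewrite Rmin_left by lra. destruct n as [|[|k]]; [lia | lia |].
      replace ((h ^ S (S k) - 0) / h - 0) with (h * h ^ k) by (simpl; field; exact Hh).
      rewrite Rabs_mult, <- RPow_abs.
      assert (Rabs h ^ k <= 1)
        by (rewrite <- (pow1 k); apply pow_incr; split; [apply Rabs_pos | lra]).
      pose proof (Rabs_pos h). nra.
    + rewrite Rmin_right, pow_i by (lra || lia).
      replace ((0 - 0) / h - 0) with 0 by (field; exact Hh). rewrite Rabs_R0. lra.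
  - apply (is_derive_ext_loc (fun _ => 0)).
    + apply (filter_imp (fun y => 0 < y < s + 1)); [|apply locally_open_interval; lra].
      intros y Hy. rewrite Rmin_right, pow_i by (lra || lia). reflexivity.
    + rewrite Rmin_right, pow_i, Rmult_0_r by (lra || lia).
      apply (is_derive_const (K := R_AbsRing) (V := R_NormedModule)).
Qed.

Definition neg4 (s : R) : R := Rmin s 0 ^ 4.
Definition dneg4 (s : R) : R := 4 * Rmin s 0 ^ 3.
Definition d2neg4 (s : R) : R := 12 * Rmin s 0 ^ 2.

Lemma is_derive_neg4 s : is_derive neg4 s (dneg4 s).
Proof.
  replace (dneg4 s) with (INR 4 * Rmin s 0 ^ (4 - 1)) by (unfold dneg4; simpl; ring).
  apply is_derive_Rmin0_pow. lia.
Qed.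

Lemma is_derive_dneg4 s : is_derive dneg4 s (d2neg4 s).
Proof.
  replace (d2neg4 s) with (4 * (INR 3 * Rmin s 0 ^ (3 - 1))) by (unfold d2neg4; simpl; ring).
  apply is_derive_scal, is_derive_Rmin0_pow. lia.
Qed.

Lemma is_derive_d2neg4 s : is_derive d2neg4 s (24 * Rmin s 0).
Proof.
  replace (24 * Rmin s 0) with (12 * (INR 2 * Rmin s 0 ^ (2 - 1))) by (simpl; ring).
  apply is_derive_scal, is_derive_Rmin0_pow. lia.
Qed.

Lemma continuity_pt_neg4 s : continuity_pt neg4 s.
Proof. exact (continuity_pt_of_is_derive _ _ is_derive_neg4 s). Qed.

Lemma continuity_pt_dneg4 s : continuity_pt dneg4 s.
Proof. exact (continuity_pt_of_is_derive _ _ is_derive_dneg4 s). Qed.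

Lemma continuity_pt_d2neg4 s : continuity_pt d2neg4 s.
Proof. exact (continuity_pt_of_is_derive _ _ is_derive_d2neg4 s). Qed.

Ltac Rmin0_cases s := unfold neg4, dneg4, d2neg4, Rmin; destruct (Rle_dec s 0); simpl.

Lemma neg4_ge0 s : 0 <= neg4 s.
Proof. Rmin0_cases s; nra. Qed.

Lemma neg4_eq0 s : 0 <= s -> neg4 s = 0.
Proof. intros. Rmin0_cases s; [replace s with 0 by lra|]; ring. Qed.

Lemma neg4_gt0 s : s < 0 -> 0 < neg4 s.
Proof. intros. Rmin0_cases s; [|lra]. assert (0 < s * s) by nra. nra. Qed.

Lemma dneg4_le0 s : dneg4 s <= 0.
Proof. Rmin0_cases s; nra. Qed.

Lemma dneg4_mul_ge0 s : 0 <= dneg4 s * s.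
Proof. Rmin0_cases s; nra. Qed.

Lemma d2neg4_ge0 s : 0 <= d2neg4 s.
Proof. Rmin0_cases s; nra. Qed.

Lemma d2neg4_mul_sq s : d2neg4 s * s ^ 2 = 12 * neg4 s.
Proof. Rmin0_cases s; ring. Qed.

Lemma d2neg4_flux_le sigma a g w : 0 < sigma ->
  - (d2neg4 w * a * (sigma ^ 2 / 2 * a + g * w)) <= 6 * g ^ 2 / sigma ^ 2 * neg4 w.
Proof.
  intros Hs. replace (neg4 w) with (d2neg4 w * w ^ 2 / 12) by (rewrite d2neg4_mul_sq; field).
  assert (Hs2 : 0 < sigma ^ 2) by (apply pow_lt; lra).
  assert (Hsq : 0 <= (sigma ^ 2 * a + g * w) ^ 2) by apply pow2_ge_0.
  assert (Hd2 := d2neg4_ge0 w).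
  (* completing the square: -a (s a / 2 + g w) <= g^2 w^2 / (2 s), with s = sigma^2 *)
  assert (H : - (a * (sigma ^ 2 / 2 * a + g * w)) <= g ^ 2 * w ^ 2 / (2 * sigma ^ 2)).
  { apply Rmult_le_reg_r with (2 * sigma ^ 2); [lra|].
    replace (g ^ 2 * w ^ 2 / (2 * sigma ^ 2) * (2 * sigma ^ 2)) with (g ^ 2 * w ^ 2)
      by (field; lra).
    nra. }
  apply Rmult_le_compat_l with (r := d2neg4 w) in H; [|assumption].
  replace (6 * g ^ 2 / sigma ^ 2 * (d2neg4 w * w ^ 2 / 12))
    with (d2neg4 w * (g ^ 2 * w ^ 2 / (2 * sigma ^ 2))) by (field; lra).
  lra.
Qed.

(** * Functions on the rectangle [[0, T] x [0, L]] *)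

Definition clamp (a b x : R) : R := Rmax a (Rmin b x).

Lemma clamp_in a b x : a <= b -> a <= clamp a b x <= b.
Proof. intros. unfold clamp, Rmax, Rmin. repeat destruct Rle_dec; lra. Qed.

Lemma clamp_id a b x : a <= x <= b -> clamp a b x = x.
Proof. intros. unfold clamp, Rmax, Rmin. repeat destruct Rle_dec; lra. Qed.

Lemma clamp_lipschitz a b x y : a <= b -> Rabs (clamp a b x - clamp a b y) <= Rabs (x - y).
Proof.
  intros. unfold clamp, Rmax, Rmin.
  repeat destruct Rle_dec; unfold Rabs; repeat destruct Rcase_abs; lra.
Qed.

(* Continuity on the closed rectangle, encoded as continuity on the whole plane
   of the extension of [f] that is constant along the normals to the boundary. *)
Definition C0_rect (T L : R) (f : R -> R -> R) : Prop :=
  forall t x, continuity_2d_pt (fun t x => f (clamp 0 T t) (clamp 0 L x)) t x.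

(* [int_0^L f t x dx] for [t] in [0, T], extended by constants to all real [t] *)
Definition space_integral (T L : R) (f : R -> R -> R) (t : R) : R :=
  RInt (fun x => f (clamp 0 T t) (clamp 0 L x)) 0 L.

Section Rectangle.

Variables T L : R.
Hypotheses (HT : 0 <= T) (HL : 0 <= L).

Lemma C0_rect_of_cont_on_rect f : cont_on_rect T L f -> C0_rect T L f.
Proof.
  intros Hf t x eps.
  assert (Hp : rect T L (clamp 0 T t, clamp 0 L x)) by (split; apply clamp_in; lra).
  destruct (proj1 (filterlim_locally _ _) (Hf _ Hp) eps) as [d Hd].
  exists d. intros s y Hs Hy.
  apply (Hd (clamp 0 T s, clamp 0 L y)).
  - split; apply ball_Rabs; eapply Rle_lt_trans; try apply clamp_lipschitz; eauto.
  - split; apply clamp_in; lra.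
Qed.

Lemma C0_rect_plus f g : C0_rect T L f -> C0_rect T L g -> C0_rect T L (fun t x => f t x + g t x).
Proof. intros Hf Hg t x. now apply continuity_2d_pt_plus. Qed.

Lemma C0_rect_minus f g : C0_rect T L f -> C0_rect T L g -> C0_rect T L (fun t x => f t x - g t x).
Proof. intros Hf Hg t x. now apply continuity_2d_pt_minus. Qed.

Lemma C0_rect_opp f : C0_rect T L f -> C0_rect T L (fun t x => - f t x).
Proof. intros Hf t x. now apply continuity_2d_pt_opp. Qed.

Lemma C0_rect_mult f g : C0_rect T L f -> C0_rect T L g -> C0_rect T L (fun t x => f t x * g t x).
Proof. intros Hf Hg t x. now apply continuity_2d_pt_mult. Qed.

Lemma C0_rect_div_const f c : C0_rect T L f -> C0_rect T L (fun t x => f t x / c).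
Proof. intros Hf t x. apply continuity_2d_pt_mult; [apply Hf | apply continuity_2d_pt_const]. Qed.

Lemma C0_rect_const c : C0_rect T L (fun _ _ => c).
Proof. intros t x. apply continuity_2d_pt_const. Qed.

Lemma C0_rect_comp (h : R -> R) f :
  (forall s, continuity_pt h s) -> C0_rect T L f -> C0_rect T L (fun t x => h (f t x)).
Proof. intros Hh Hf t x. now apply continuity_1d_2d_pt_comp. Qed.

Lemma C0_rect_pow f n : C0_rect T L f -> C0_rect T L (fun t x => f t x ^ n).
Proof.
  intros Hf. induction n as [|n IH]; simpl.
  - apply C0_rect_const.
  - now apply C0_rect_mult.
Qed.

Lemma C0_rect_time (h : R -> R) :
  (forall t, continuous (fun t => h (clamp 0 T t)) t) -> C0_rect T L (fun t _ => h t).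
Proof.
  intros Hh t x. apply (continuity_1d_2d_pt_comp (fun t => h (clamp 0 T t)) (fun t _ => t)).
  - apply continuity_pt_filterlim, Hh.
  - apply continuity_2d_pt_id1.
Qed.

Lemma C0_rect_slice f t y : C0_rect T L f -> continuous (fun x => f (clamp 0 T t) (clamp 0 L x)) y.
Proof.
  intros Hf. apply filterlim_locally. intros eps.
  destruct (Hf t y eps) as [d Hd]. exists d. intros x Hx.
  apply Hd; [rewrite Rminus_eq_0, Rabs_R0; apply cond_pos | exact Hx].
Qed.

Lemma space_integral_eq (f : R -> R -> R) t : 0 <= t <= T ->
  space_integral T L f t = RInt (f t) 0 L.
Proof.
  intros Ht. apply RInt_ext. intros x Hx. rewrite Rmin_left, Rmax_right in Hx by lra.
  rewrite !clamp_id; lra.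
Qed.

Lemma C0_rect_ex_RInt f t : 0 <= t <= T -> C0_rect T L f -> ex_RInt (f t) 0 L.
Proof.
  intros Ht Hf. apply (ex_RInt_ext (fun x => f (clamp 0 T t) (clamp 0 L x))).
  - intros x Hx. rewrite Rmin_left, Rmax_right in Hx by lra. rewrite !clamp_id; lra.
  - apply (ex_RInt_continuous (V := R_CompleteNormedModule)). intros; now apply C0_rect_slice.
Qed.

Lemma C0_rect_bounded f : C0_rect T L f ->
  exists K, forall t x, 0 <= t <= T -> 0 <= x <= L -> Rabs (f t x) <= K.
Proof.
  intros Hf. set (F := fun s y => f (clamp 0 T s) (clamp 0 L y)).
  destruct (uniform_continuity_2d F 0 T 0 L (fun s y _ _ => Hf s y) (mkposreal 1 Rlt_0_1))
    as [d Hd].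
  assert (Hd0 := cond_pos d).
  destruct (archimed_cor1 (d / (T + L + 1))) as [N [HN HN0]].
  { apply Rdiv_lt_0_compat; lra. }
  assert (HN1 : 0 < INR N) by now apply lt_0_INR.
  assert (Hmesh : forall z, 0 <= z <= T + L -> z / INR N < d).
  { intros z Hz. apply Rle_lt_trans with ((T + L + 1) * / INR N).
    - unfold Rdiv. apply Rmult_le_compat_r; [left; now apply Rinv_0_lt_compat | lra].
    - apply Rmult_lt_reg_l with (/ (T + L + 1)); [apply Rinv_0_lt_compat; lra|].
      rewrite <- Rmult_assoc, Rinv_l, Rmult_1_l by lra. unfold Rdiv in HN. lra. }
  exists (Rabs (F 0 0) + INR N). intros t x Ht Hx.
  (* march from the corner to (t, x) in N steps shorter than the modulus d *)
  assert (Hstep : forall k, (k <= N)%nat ->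
    Rabs (F (INR k * t / INR N) (INR k * x / INR N)) <= Rabs (F 0 0) + INR k).
  { assert (Hpt : forall k z Z, (k <= N)%nat -> 0 <= z <= Z -> 0 <= INR k * z / INR N <= Z).
    { intros k z Z Hk Hz. apply le_INR in Hk. split.
      - apply Rdiv_le_0_compat; [apply Rmult_le_pos; [apply pos_INR|]|]; lra.
      - apply Rmult_le_reg_r with (INR N); [lra|]. field_simplify; [|lra].
        assert (0 <= INR k) by apply pos_INR. nra. }
    induction k as [|k IH]; intros Hk.
    - change (INR 0) with 0. rewrite !Rmult_0_l, !Rdiv_0_l. lra.
    - assert (Hk' : (k <= N)%nat) by lia.
      specialize (IH Hk').
      assert (Hc : Rabs (F (INR (S k) * t / INR N) (INR (S k) * x / INR N)
                         - F (INR k * t / INR N) (INR k * x / INR N)) < 1).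
      { apply Hd; try apply Hpt; try lra; try lia; rewrite S_INR;
          [replace ((INR k + 1) * t / INR N - INR k * t / INR N) with (t / INR N) by (field; lra)
          |replace ((INR k + 1) * x / INR N - INR k * x / INR N) with (x / INR N) by (field; lra)];
          rewrite Rabs_pos_eq; try apply Hmesh; try apply Rdiv_le_0_compat; lra. }
      pose proof (Rabs_triang_inv (F (INR (S k) * t / INR N) (INR (S k) * x / INR N))
                                  (F (INR k * t / INR N) (INR k * x / INR N))).
      rewrite S_INR in *. lra. }
  specialize (Hstep N (Nat.le_refl N)).
  replace (INR N * t / INR N) with t in Hstep by (field; lra).
  replace (INR N * x / INR N) with x in Hstep by (field; lra).
  unfold F in *. rewrite (clamp_id 0 T t), (clamp_id 0 L x) in Hstep; lra.
Qed.


Lemma continuous_space_integral f t0 : C0_rect T L f -> continuous (space_integral T L f) t0.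
Proof.
  intros Hf. apply filterlim_locally. intros eps.
  set (F := fun s y => f (clamp 0 T s) (clamp 0 L y)).
  assert (He : 0 < eps / (L + 1)) by (apply Rdiv_lt_0_compat; [apply cond_pos | lra]).
  destruct (uniform_continuity_2d F (t0 - 1) (t0 + 1) 0 L (fun s y _ _ => Hf s y)
              (mkposreal _ He)) as [d Hd].
  assert (Hd1 : 0 < Rmin d 1) by (apply Rmin_glb_lt; [apply cond_pos | lra]).
  exists (mkposreal _ Hd1). intros s Hs. change (Rabs (s - t0) < Rmin d 1) in Hs.
  assert (Hs1 := Rlt_le_trans _ _ _ Hs (Rmin_l _ _)).
  assert (Hs2 := Rabs_def2 _ _ (Rlt_le_trans _ _ _ Hs (Rmin_r _ _))).
  assert (Hex : forall s, ex_RInt (F s) 0 L).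
  { intros. apply (ex_RInt_continuous (V := R_CompleteNormedModule)).
    intros; now apply C0_rect_slice. }
  apply ball_Rabs. unfold space_integral. fold (F s) (F t0).
  rewrite <- (RInt_minus (V := R_CompleteNormedModule)) by auto.
  eapply Rle_lt_trans.
  - apply abs_RInt_le_const with (M := eps / (L + 1));
      [lra | now apply (ex_RInt_minus (V := R_NormedModule)) |].
    intros x Hx. left. apply (Hd t0 x s x); try lra. rewrite Rminus_eq_0, Rabs_R0. apply cond_pos.
  - assert (Hpos := cond_pos eps).
    replace ((L - 0) * (eps / (L + 1))) with (eps * (L / (L + 1))) by (field; lra).
    assert (L / (L + 1) < 1) by (apply Rmult_lt_reg_r with (L + 1); [lra|]; field_simplify; lra).
    nra.
Qed.

Lemma is_derive_space_integral f D t0 :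
  C0_rect T L f -> C0_rect T L D ->
  (forall t x, 0 <= t <= T -> 0 <= x <= L -> is_derive (fun s => f s x) t (D t x)) ->
  0 < t0 < T -> is_derive (space_integral T L f) t0 (RInt (D t0) 0 L).
Proof.
  intros Hf HD Hder Ht0.
  set (g := fun s x => f s (clamp 0 L x)).
  assert (Hder_g : forall s x, 0 < s < T -> is_derive (fun z => g z x) s (D s (clamp 0 L x))).
  { intros s x Hs. apply Hder; [lra | now apply clamp_in]. }
  assert (Hg : is_derive (fun s => RInt (g s) 0 L) t0
                 (RInt (fun x => Derive (fun z => g z x) t0) 0 L)).
  { apply is_derive_RInt_param.
    - apply (filter_imp _ _ (fun s Hs x _ => ex_intro _ _ (Hder_g s x Hs))).
      now apply locally_open_interval.
    - intros x _. apply continuity_2d_pt_ext_loc with (fun s y => D (clamp 0 T s) (clamp 0 L y));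
        [|apply HD].
      destruct (locally_open_interval 0 T t0 Ht0) as [e He].
      exists e. intros s y Hs _. specialize (He s Hs).
      rewrite (clamp_id 0 T s) by lra. symmetry. now apply is_derive_unique, Hder_g.
    - apply (filter_imp (fun s => 0 < s < T)); [|now apply locally_open_interval].
      intros s Hs. rewrite <- (clamp_id 0 T s) by lra.
      apply (ex_RInt_continuous (V := R_CompleteNormedModule)). intros; now apply C0_rect_slice. }
  apply (is_derive_ext_loc (fun s => RInt (g s) 0 L)).
  - apply (filter_imp (fun s => 0 < s < T)); [|now apply locally_open_interval].
    intros s Hs. unfold space_integral, g. now rewrite (clamp_id 0 T s) by lra.
  - replace (RInt (D t0) 0 L) with (RInt (fun x => Derive (fun z => g z x) t0) 0 L); [exact Hg|].
    apply RInt_ext. intros x Hx. rewrite Rmin_left, Rmax_right in Hx by lra.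
    replace (D t0 x) with (D t0 (clamp 0 L x)) by (now rewrite clamp_id by lra).
    now apply is_derive_unique, Hder_g.
Qed.

End Rectangle.

Lemma C0_rect_neg4 T L f : C0_rect T L f -> C0_rect T L (fun t x => neg4 (f t x)).
Proof. apply C0_rect_comp, continuity_pt_neg4. Qed.

Lemma C0_rect_dneg4 T L f : C0_rect T L f -> C0_rect T L (fun t x => dneg4 (f t x)).
Proof. apply C0_rect_comp, continuity_pt_dneg4. Qed.

Lemma C0_rect_d2neg4 T L f : C0_rect T L f -> C0_rect T L (fun t x => d2neg4 (f t x)).
Proof. apply C0_rect_comp, continuity_pt_d2neg4. Qed.

Ltac solve_C0_rect :=
  repeat match goal with
  | |- C0_rect _ _ (fun t x => _ + _) => apply C0_rect_plus
  | |- C0_rect _ _ (fun t x => _ - _) => apply C0_rect_minus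
  | |- C0_rect _ _ (fun t x => - _) => apply C0_rect_opp
  | |- C0_rect _ _ (fun t x => _ * _) => apply C0_rect_mult
  | |- C0_rect _ _ (fun t x => _ / _) => apply C0_rect_div_const
  | |- C0_rect _ _ (fun t x => _ ^ _) => apply C0_rect_pow
  | |- C0_rect _ _ (fun t x => neg4 _) => apply C0_rect_neg4
  | |- C0_rect _ _ (fun t x => dneg4 _) => apply C0_rect_dneg4
  | |- C0_rect _ _ (fun t x => d2neg4 _) => apply C0_rect_d2neg4
  | |- C0_rect _ _ (fun t x => _) => apply C0_rect_const
  end; auto.

(* Proves [ex_RInt (fun x => e[t, x]) 0 L] by recognizing [e] as a slice at time [t]
   of a function continuous on the rectangle. *)
Ltac ex_RInt_slice T t :=
  match goal with
  | |- ex_RInt ?h 0 ?L =>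
      let F := eval pattern t in h in
      match F with
      | ?G t => apply (C0_rect_ex_RInt T L ltac:(lra) G t); [lra | solve [solve_C0_rect]]
      end
  end.

Section Slices.

Variables T L : R.
Hypothesis HL : 0 <= L.

Lemma RInt_slice_is_derive D F t : C0_rect T L D -> 0 <= t <= T ->
  (forall x, 0 <= x <= L -> is_derive F x (D t x)) -> RInt (D t) 0 L = F L - F 0.
Proof.
  intros HD Ht HF. rewrite <- (space_integral_eq T L HL D t Ht).
  apply RInt_is_derive; [lra | | intros; now apply C0_rect_slice].
  intros x Hx. rewrite !clamp_id by lra. now apply HF.
Qed.

Lemma RInt_slice_by_parts f df g dg t :
  C0_rect T L f -> C0_rect T L df -> C0_rect T L g -> C0_rect T L dg -> 0 <= t <= T ->
  (forall x, 0 <= x <= L -> is_derive (f t) x (df t x)) ->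
  (forall x, 0 <= x <= L -> is_derive (g t) x (dg t x)) ->
  RInt (fun x => f t x * dg t x) 0 L
  = f t L * g t L - f t 0 * g t 0 - RInt (fun x => df t x * g t x) 0 L.
Proof.
  intros Hf Hdf Hg Hdg Ht Hfx Hgx.
  assert (E : RInt (fun x => df t x * g t x + f t x * dg t x) 0 L = f t L * g t L - f t 0 * g t 0).
  { apply (RInt_slice_is_derive (fun t x => df t x * g t x + f t x * dg t x)
      (fun x => f t x * g t x) t); solve_C0_rect.
    intros x Hx. apply is_derive_Rmult; [apply Hfx | apply Hgx]; exact Hx. }
  rewrite RInt_Rplus in E by ex_RInt_slice T t. lra.
Qed.

Lemma nonneg_of_space_integral_neg4 f t : 0 < L -> C0_rect T L f -> 0 <= t <= T ->
  space_integral T L (fun t x => neg4 (f t x)) t <= 0 -> forall x, 0 <= x <= L -> 0 <= f t x.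
Proof.
  intros HL' Hf Ht Hint x Hx. destruct (Rle_lt_dec 0 (f t x)) as [|Hneg]; [assumption | exfalso].
  assert (Hpos : 0 < space_integral T L (fun t x => neg4 (f t x)) t).
  { apply (RInt_gt_0_of_point _ 0 L x Hx HL').
    - intros y _. apply (C0_rect_slice _ _ (fun t x => neg4 (f t x))). solve_C0_rect.
    - intros y _. apply neg4_ge0.
    - rewrite !clamp_id by lra. now apply neg4_gt0. }
  lra.
Qed.

Lemma is_derive_space_integral_neg4 f t0 :
  C0_rect T L f -> C0_rect T L (pt f) ->
  (forall t x, 0 <= t <= T -> 0 <= x <= L -> ex_derive (fun s => f s x) t) -> 0 < t0 < T ->
  is_derive (space_integral T L (fun t x => neg4 (f t x))) t0
    (RInt (fun x => dneg4 (f t0 x) * pt f t0 x) 0 L).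
Proof.
  intros Hf Hft Hder Ht0.
  apply (is_derive_space_integral T L HL _ (fun t x => dneg4 (f t x) * pt f t x));
    solve_C0_rect.
  intros t x Ht Hx. apply (is_derive_Rcomp neg4 (fun s => f s x)).
  - apply is_derive_neg4.
  - now apply Derive_correct, Hder.
Qed.

End Slices.

(** * The mean-field game system *)

Lemma b_of_pos eps : 0 < eps -> 0 < b_of eps.
Proof. intros. unfold b_of. apply Rdiv_lt_0_compat; lra. Qed.

Lemma c_of_pos eps : 0 < eps -> 0 < c_of eps.
Proof. intros. unfold c_of. apply Rdiv_lt_0_compat; lra. Qed.

Lemma b_of_add_c_of eps : 0 < eps -> b_of eps + c_of eps = 1.
Proof. intros. unfold b_of, c_of. field. lra. Qed.

Definition mfg_flux (sigma eps L : R) (u m : R -> R -> R) (t x : R) : R :=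
  sigma ^ 2 / 2 * px m t x + Gc eps L u m t x * m t x.

Definition mfg_flux_x (sigma eps L : R) (u m : R -> R -> R) (t x : R) : R :=
  sigma ^ 2 / 2 * pxx m t x - / 2 * pxx u t x * m t x + Gc eps L u m t x * px m t x.

Lemma is_derive_Gc_x eps L (u m : R -> R -> R) t x :
  ex_derive (px u t) x -> is_derive (Gc eps L u m t) x (- / 2 * pxx u t x).
Proof. intros H. unfold Gc. auto_derive; [exact H | unfold pxx; ring]. Qed.

Lemma is_derive_mfg_flux_x sigma eps L (u m : R -> R -> R) t x :
  ex_derive (px u t) x -> ex_derive (m t) x -> ex_derive (px m t) x ->
  is_derive (mfg_flux sigma eps L u m t) x (mfg_flux_x sigma eps L u m t x).
Proof.
  intros Hu Hm Hmx. unfold mfg_flux, mfg_flux_x, Gc. auto_derive; [easy | unfold pxx, px; field].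
Qed.

Section C12.

Variables (T L : R) (w : R -> R -> R).
Hypotheses (HT : 0 <= T) (HL : 0 <= L) (Hw : C12_rect T L w).

Lemma C12_rect_C0 : C0_rect T L w.
Proof. apply C0_rect_of_cont_on_rect; try assumption. apply Hw. Qed.

Lemma C12_rect_C0_pt : C0_rect T L (pt w).
Proof. apply C0_rect_of_cont_on_rect; try assumption. apply Hw. Qed.

Lemma C12_rect_C0_px : C0_rect T L (px w).
Proof. apply C0_rect_of_cont_on_rect; try assumption. apply Hw. Qed.

Lemma C12_rect_C0_pxx : C0_rect T L (pxx w).
Proof. apply C0_rect_of_cont_on_rect; try assumption. apply Hw. Qed.

Lemma C12_rect_ex_derive t x : 0 <= t <= T -> 0 <= x <= L ->
  ex_derive (fun s => w s x) t /\ ex_derive (w t) x /\ ex_derive (px w t) x.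
Proof. intros Ht Hx. exact (proj1 Hw t x (conj Ht Hx)). Qed.

End C12.

Section MFG.

Variables (L T sigma r eps : R) (uT m0 : R -> R) (u m : R -> R -> R).
Hypotheses (HL : 0 < L) (HT : 0 < T) (Hsigma : 0 < sigma) (Hr : 0 < r) (Heps : 0 < eps).
Hypotheses (u_C12 : C12_rect T L u) (m_C12 : C12_rect T L m).
Hypothesis HJB : forall t x, 0 < t < T -> 0 < x < L ->
  pt u t x + sigma ^ 2 / 2 * pxx u t x - r * u t x + (Gc eps L u m t x) ^ 2 = 0.
Hypothesis FP : forall t x, 0 < t < T -> 0 < x < L ->
  pt m t x - sigma ^ 2 / 2 * pxx m t x - Derive (fun y => Gc eps L u m t y * m t y) x = 0.
Hypothesis initial_terminal : forall x, in_cc 0 L x -> m 0 x = m0 x /\ u T x = uT x.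
Hypothesis neumann : forall t, in_cc 0 T t -> px u t 0 = 0 /\ px u t L = 0.
Hypothesis no_flux : forall t x, in_cc 0 T t -> (x = 0 \/ x = L) ->
  sigma ^ 2 / 2 * px m t x + Gc eps L u m t x * m t x = 0.
Hypotheses (m0_density : prob_density L m0) (uT_nonneg : forall x, in_cc 0 L x -> 0 <= uT x).

Notation flux := (mfg_flux sigma eps L u m).
Notation flux_x := (mfg_flux_x sigma eps L u m).
Notation A t := (RInt (fun y => px u t y * m t y) 0 L).
Notation kinetic t := (RInt (fun x => m t x * px u t x ^ 2) 0 L).

Let HT0 : 0 <= T := Rlt_le _ _ HT.
Let HL0 : 0 <= L := Rlt_le _ _ HL.
Let u_C0 := C12_rect_C0 T L u HT0 HL0 u_C12.
Let ut_C0 := C12_rect_C0_pt T L u HT0 HL0 u_C12.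
Let ux_C0 := C12_rect_C0_px T L u HT0 HL0 u_C12.
Let uxx_C0 := C12_rect_C0_pxx T L u HT0 HL0 u_C12.
Let m_C0 := C12_rect_C0 T L m HT0 HL0 m_C12.
Let mt_C0 := C12_rect_C0_pt T L m HT0 HL0 m_C12.
Let mx_C0 := C12_rect_C0_px T L m HT0 HL0 m_C12.
Let mxx_C0 := C12_rect_C0_pxx T L m HT0 HL0 m_C12.

Let A_C0 : C0_rect T L (fun t _ => A t).
Proof.
  apply C0_rect_time. intros t.
  apply (continuous_ext (space_integral T L (fun t y => px u t y * m t y))).
  - intros s. apply RInt_ext. intros x Hx. rewrite Rmin_left, Rmax_right in Hx by lra.
    now rewrite (clamp_id 0 L x) by lra.
  - apply continuous_space_integral; solve_C0_rect.
Qed.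

Let Gc_C0 : C0_rect T L (Gc eps L u m).
Proof. unfold Gc. solve_C0_rect. Qed.

Let flux_C0 : C0_rect T L flux.
Proof. unfold mfg_flux. solve_C0_rect. Qed.

Let flux_x_C0 : C0_rect T L flux_x.
Proof. unfold mfg_flux_x. solve_C0_rect. Qed.

Lemma is_derive_flux t x : 0 <= t <= T -> 0 <= x <= L -> is_derive (flux t) x (flux_x t x).
Proof.
  intros Ht Hx.
  destruct (C12_rect_ex_derive T L u u_C12 t x Ht Hx) as (_ & _ & Hu).
  destruct (C12_rect_ex_derive T L m m_C12 t x Ht Hx) as (_ & Hm & Hmx).
  now apply is_derive_mfg_flux_x.
Qed.

Lemma FP_divergence t x : 0 < t < T -> 0 < x < L -> pt m t x = flux_x t x.
Proof.
  intros Ht Hx. specialize (FP t x Ht Hx).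
  destruct (C12_rect_ex_derive T L u u_C12 t x ltac:(lra) ltac:(lra)) as (_ & _ & Hu).
  destruct (C12_rect_ex_derive T L m m_C12 t x ltac:(lra) ltac:(lra)) as (_ & Hm & _).
  assert (E : Derive (fun y => Gc eps L u m t y * m t y) x
              = - / 2 * pxx u t x * m t x + Gc eps L u m t x * px m t x).
  { apply is_derive_unique, is_derive_Rmult;
      [now apply is_derive_Gc_x | now apply Derive_correct]. }
  rewrite E in FP. unfold mfg_flux_x. lra.
Qed.

Lemma flux_boundary t : 0 <= t <= T -> flux t 0 = 0 /\ flux t L = 0.
Proof. intros Ht. split; apply no_flux; auto. Qed.

Lemma RInt_mt_eq_0 t : 0 < t < T -> RInt (pt m t) 0 L = 0.
Proof.
  intros Ht. transitivity (RInt (flux_x t) 0 L).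
  - apply RInt_ext. intros x Hx. rewrite Rmin_left, Rmax_right in Hx by lra.
    now apply FP_divergence.
  - rewrite (RInt_slice_is_derive T L HL0 flux_x (flux t) t); solve_C0_rect.
    + destruct (flux_boundary t) as [-> ->]; lra.
    + lra.
    + intros x Hx. apply is_derive_flux; lra.
Qed.

Lemma mass_conservation t : 0 <= t <= T -> RInt (m t) 0 L = 1.
Proof.
  intros Ht. rewrite <- (space_integral_eq T L HL0 m t Ht).
  rewrite (constant_of_derive_0 (space_integral T L m) 0 t); try lra.
  - rewrite space_integral_eq, <- (proj2 m0_density) by lra.
    apply RInt_ext. intros x Hx. rewrite Rmin_left, Rmax_right in Hx by lra.
    apply initial_terminal. split; lra.
  - intros s _. apply continuous_space_integral; solve_C0_rect.
  - intros s Hs. rewrite <- (RInt_mt_eq_0 s) by lra.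
    apply is_derive_space_integral; solve_C0_rect; [|lra].
    intros t' x Ht' Hx. now apply Derive_correct, (C12_rect_ex_derive T L m m_C12 t' x).
Qed.

Lemma neg4_m_derivative_le : exists K, forall t, 0 < t < T ->
  RInt (fun x => dneg4 (m t x) * pt m t x) 0 L
  <= K * space_integral T L (fun t x => neg4 (m t x)) t.
Proof.
  destruct (C0_rect_bounded T L HT0 HL0 _ Gc_C0) as [K0 HK0].
  exists (6 * K0 ^ 2 / sigma ^ 2). intros t Ht.
  rewrite space_integral_eq, <- RInt_Rmult_l by (lra || ex_RInt_slice T t).
  transitivity (RInt (fun x => dneg4 (m t x) * flux_x t x) 0 L).
  { right. apply RInt_ext. intros x Hx. rewrite Rmin_left, Rmax_right in Hx by lra.
    now rewrite FP_divergence. }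
  rewrite (RInt_slice_by_parts T L HL0 (fun t x => dneg4 (m t x))
             (fun t x => d2neg4 (m t x) * px m t x) flux flux_x t); solve_C0_rect.
  - destruct (flux_boundary t) as [-> ->]; [lra|].
    rewrite !Rmult_0_r, Rminus_0_r, Rminus_0_l, <- RInt_Ropp by ex_RInt_slice T t.
    apply RInt_le; [lra | ex_RInt_slice T t | ex_RInt_slice T t |].
    intros x Hx. unfold mfg_flux.
    assert (HG : Gc eps L u m t x ^ 2 <= K0 ^ 2).
    { rewrite <- (pow2_abs (Gc eps L u m t x)). apply pow_incr.
      split; [apply Rabs_pos | apply HK0; lra]. }
    assert (Hs2 : 0 < sigma ^ 2) by (apply pow_lt; lra).
    assert (6 * Gc eps L u m t x ^ 2 / sigma ^ 2 <= 6 * K0 ^ 2 / sigma ^ 2)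
      by (apply Rmult_le_compat_r; [left; apply Rinv_0_lt_compat |]; lra).
    pose proof (d2neg4_flux_le sigma (px m t x) (Gc eps L u m t x) (m t x) Hsigma).
    pose proof (neg4_ge0 (m t x)). nra.
  - lra.
  - intros x Hx. apply (is_derive_Rcomp dneg4 (m t)); [apply is_derive_dneg4|].
    apply Derive_correct, (C12_rect_ex_derive T L m m_C12 t x); lra.
  - intros x Hx. apply is_derive_flux; lra.
Qed.

Lemma m_nonneg t x : 0 <= t <= T -> 0 <= x <= L -> 0 <= m t x.
Proof.
  intros Ht. apply (nonneg_of_space_integral_neg4 T L m t HL m_C0 Ht).
  destruct neg4_m_derivative_le as [K HK].
  apply (gronwall_nonpos _ (fun s => RInt (fun x => dneg4 (m s x) * pt m s x) 0 L) K 0 T);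
    [| | exact HK | | exact Ht].
  - intros s _. apply continuous_space_integral; solve_C0_rect.
  - intros s Hs. apply is_derive_space_integral_neg4; solve_C0_rect.
    intros s' y Hs' Hy. now apply (C12_rect_ex_derive T L m m_C12 s' y).
  - apply Req_le. rewrite space_integral_eq by lra.
    etransitivity; [|apply (RInt_const_0 0 L)]. apply RInt_ext.
    intros y Hy. rewrite Rmin_left, Rmax_right in Hy by lra.
    apply neg4_eq0. rewrite (proj1 (initial_terminal y ltac:(split; lra))).
    apply (proj1 m0_density). split; lra.
Qed.

Lemma neg4_u_derivative_ge0 t : 0 < t < T -> 0 <= RInt (fun x => dneg4 (u t x) * pt u t x) 0 L.
Proof.
  intros Ht.
  assert (Hparts : RInt (fun x => dneg4 (u t x) * pxx u t x) 0 L
                   = - RInt (fun x => d2neg4 (u t x) * px u t x * px u t x) 0 L).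
  { rewrite (RInt_slice_by_parts T L HL0 (fun t x => dneg4 (u t x))
               (fun t x => d2neg4 (u t x) * px u t x) (px u) (pxx u) t); solve_C0_rect.
    - destruct (neumann t) as [-> ->]; [unfold in_cc; lra | lra].
    - lra.
    - intros x Hx. apply (is_derive_Rcomp dneg4 (u t)); [apply is_derive_dneg4|].
      apply Derive_correct, (C12_rect_ex_derive T L u u_C12 t x); lra.
    - intros x Hx. apply Derive_correct, (C12_rect_ex_derive T L u u_C12 t x); lra. }
  (* adding sigma^2/2 times the vanishing integral of [Hparts] makes the integrand nonnegative *)
  assert (Hpos : 0 <= RInt (fun x => dneg4 (u t x) * pt u t x + sigma ^ 2 / 2 *
             (dneg4 (u t x) * pxx u t x + d2neg4 (u t x) * px u t x * px u t x)) 0 L).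
  { apply RInt_ge_0; [lra | ex_RInt_slice T t |]. intros x Hx.
    replace (pt u t x) with (- (sigma ^ 2 / 2) * pxx u t x + r * u t x - Gc eps L u m t x ^ 2)
      by (specialize (HJB t x Ht Hx); lra).
    pose proof (dneg4_mul_ge0 (u t x)). pose proof (dneg4_le0 (u t x)).
    pose proof (d2neg4_ge0 (u t x)). pose proof (pow2_ge_0 sigma).
    pose proof (pow2_ge_0 (Gc eps L u m t x)).
    assert (0 <= d2neg4 (u t x) * px u t x * px u t x)
      by (rewrite Rmult_assoc; apply Rmult_le_pos; [assumption | apply Rle_0_sqr]).
    nra. }
  rewrite RInt_Rplus, RInt_Rmult_l, RInt_Rplus, Hparts in Hpos by ex_RInt_slice T t.
  lra.
Qed.

Lemma u_nonneg t x : 0 <= t <= T -> 0 <= x <= L -> 0 <= u t x.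
Proof.
  intros Ht. apply (nonneg_of_space_integral_neg4 T L u t HL u_C0 Ht).
  assert (HgT : space_integral T L (fun t x => neg4 (u t x)) T = 0).
  { rewrite space_integral_eq by lra. etransitivity; [|apply (RInt_const_0 0 L)].
    apply RInt_ext. intros y Hy. rewrite Rmin_left, Rmax_right in Hy by lra.
    apply neg4_eq0. rewrite (proj2 (initial_terminal y ltac:(split; lra))).
    apply uT_nonneg. split; lra. }
  rewrite <- HgT.
  apply (nondecreasing_of_derive _ (fun s => RInt (fun x => dneg4 (u s x) * pt u s x) 0 L) t T).
  - lra.
  - intros s _. apply continuous_space_integral; solve_C0_rect.
  - intros s Hs. apply is_derive_space_integral_neg4; solve_C0_rect; [|lra].
    intros s' y Hs' Hy. now apply (C12_rect_ex_derive T L u u_C12 s' y).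
  - intros s Hs. apply neg4_u_derivative_ge0. lra.
Qed.

(* [Gc eps L u m t x = (B t - px u t x) / 2] *)
Notation B t := (b_of eps + c_of eps * A t).

Lemma energy_derivative_eq t : 0 < t < T ->
  RInt (fun x => pt u t x * m t x + u t x * pt m t x) 0 L
  = RInt (fun x => m t x * (r * u t x + (px u t x ^ 2 - B t ^ 2) / 4)) 0 L.
Proof.
  intros Ht.
  set (D := fun t x => px u t x * flux t x + u t x * flux_x t x
                       - sigma ^ 2 / 2 * (pxx u t x * m t x + px u t x * px m t x)).
  assert (HD_C0 : C0_rect T L D) by (unfold D; solve_C0_rect).
  (* [D] is the x-derivative of [u flux - sigma^2/2 u_x m], which vanishes at x = 0, L *)
  assert (HD : RInt (D t) 0 L = 0).
  { rewrite (RInt_slice_is_derive T L HL0 D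
               (fun y => u t y * flux t y - sigma ^ 2 / 2 * (px u t y * m t y)) t HD_C0
               ltac:(lra)).
    - destruct (flux_boundary t) as [-> ->]; [lra|].
      destruct (neumann t) as [-> ->]; [unfold in_cc; lra | lra].
    - intros x Hx.
      destruct (C12_rect_ex_derive T L u u_C12 t x ltac:(lra) Hx) as (_ & Hu & Hux).
      destruct (C12_rect_ex_derive T L m m_C12 t x ltac:(lra) Hx) as (_ & Hm & _).
      apply is_derive_Rminus.
      + apply is_derive_Rmult; [now apply Derive_correct | apply is_derive_flux; lra].
      + apply is_derive_scal, is_derive_Rmult; now apply Derive_correct. }
  transitivity (RInt (fun x => m t x * (r * u t x + (px u t x ^ 2 - B t ^ 2) / 4) + D t x) 0 L).
  - apply RInt_ext. intros x Hx. rewrite Rmin_left, Rmax_right in Hx by lra.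
    rewrite (FP_divergence t x Ht Hx).
    replace (pt u t x) with (- (sigma ^ 2 / 2) * pxx u t x + r * u t x - Gc eps L u m t x ^ 2)
      by (specialize (HJB t x Ht Hx); lra).
    unfold D, mfg_flux, mfg_flux_x, Gc.
    (* [RInt_ext] states the equation in the carrier of [R_CompleteNormedModule] *)
    match goal with |- ?a = ?b => change (@eq R a b) end. field.
  - rewrite RInt_Rplus, HD by ex_RInt_slice T t. lra.
Qed.

Lemma energy_derivative_ge t : 0 < t < T ->
  b_of eps * (kinetic t - 1) <= 4 * RInt (fun x => pt u t x * m t x + u t x * pt m t x) 0 L.
Proof.
  intros Ht. rewrite energy_derivative_eq by lra.
  assert (Hmass := mass_conservation t ltac:(lra)).
  assert (HA : A t ^ 2 <= kinetic t).
  { apply RInt_sq_le_density; try ex_RInt_slice T t; [lra | | exact Hmass].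
    intros x Hx. apply m_nonneg; lra. }
  assert (HB : B t ^ 2 <= b_of eps + c_of eps * A t ^ 2).
  { apply sq_convex_comb; [apply Rlt_le, b_of_pos | apply Rlt_le, c_of_pos | apply b_of_add_c_of];
      assumption. }
  assert (Hlow : / 4 * kinetic t - / 4 * B t ^ 2
                 <= RInt (fun x => m t x * (r * u t x + (px u t x ^ 2 - B t ^ 2) / 4)) 0 L).
  { transitivity (RInt (fun x => / 4 * (m t x * px u t x ^ 2) + (- / 4 * B t ^ 2) * m t x) 0 L).
    - rewrite RInt_Rplus, !RInt_Rmult_l, Hmass by ex_RInt_slice T t. lra.
    - apply RInt_le; [lra | ex_RInt_slice T t | ex_RInt_slice T t |].
      intros x Hx. assert (0 <= m t x) by (apply m_nonneg; lra).
      assert (0 <= u t x) by (apply u_nonneg; lra).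
      assert (0 <= m t x * (r * u t x)) by (apply Rmult_le_pos; [|apply Rmult_le_pos]; lra).
      lra. }
  assert (Hbc := b_of_add_c_of eps Heps). assert (Hc := c_of_pos eps Heps). nra.
Qed.

Notation energy := (space_integral T L (fun t x => u t x * m t x)).
Notation kinetic_clamped := (space_integral T L (fun t x => m t x * px u t x ^ 2)).

Lemma is_derive_energy t : 0 < t < T ->
  is_derive energy t (RInt (fun x => pt u t x * m t x + u t x * pt m t x) 0 L).
Proof.
  intros Ht.
  apply (is_derive_space_integral T L HL0 _ (fun t x => pt u t x * m t x + u t x * pt m t x));
    try solve_C0_rect.
  intros s x Hs Hx.
  destruct (C12_rect_ex_derive T L u u_C12 s x Hs Hx) as (Hut & _ & _).
  destruct (C12_rect_ex_derive T L m m_C12 s x Hs Hx) as (Hmt & _ & _).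
  apply (is_derive_Rmult (fun s => u s x) (fun s => m s x)); now apply Derive_correct.
Qed.

Lemma energy_growth :
  b_of eps * RInt kinetic_clamped 0 T <= 4 * (energy T - energy 0) + b_of eps * T.
Proof.
  assert (Hk : forall t, continuous kinetic_clamped t)
    by (intros; apply continuous_space_integral; solve_C0_rect).
  rewrite <- RInt_Rmult_l
    by (apply (ex_RInt_continuous (V := R_CompleteNormedModule)); intros; apply Hk).
  apply (Rle_trans _ ((4 * energy T + b_of eps * T) - (4 * energy 0 + b_of eps * 0)));
    [|lra].
  apply (RInt_le_of_derive_ge (fun t => 4 * energy t + b_of eps * t)
           (fun t => 4 * RInt (fun x => pt u t x * m t x + u t x * pt m t x) 0 L + b_of eps)).
  - lra.
  - intros t _.
    apply (continuous_plus (K := R_AbsRing) (V := R_NormedModule)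
             (fun t => 4 * energy t) (fun t => b_of eps * t)).
    + apply (continuous_scal_r (K := R_AbsRing) (V := R_NormedModule)).
      apply continuous_space_integral; solve_C0_rect.
    + apply (continuous_scal_r (K := R_AbsRing) (V := R_NormedModule)), continuous_id.
  - intros t Ht. apply is_derive_Rplus.
    + now apply is_derive_scal, is_derive_energy.
    + rewrite <- (Rmult_1_r (b_of eps)) at 2.
      apply is_derive_scal, (is_derive_id (K := R_AbsRing)).
  - intros t. apply (continuous_scal_r (K := R_AbsRing) (V := R_NormedModule)), Hk.
  - intros t Ht. rewrite space_integral_eq by lra.
    pose proof (energy_derivative_ge t Ht). lra.
Qed.

Lemma energy_initial_ge0 : 0 <= energy 0.
Proof.
  rewrite space_integral_eq by lra. apply RInt_ge_0; [lra | ex_RInt_slice T 0 |].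
  intros x Hx. apply Rmult_le_pos; [apply u_nonneg | apply m_nonneg]; lra.
Qed.

Lemma energy_terminal_le U : (forall x, 0 <= x <= L -> uT x <= U) -> energy T <= U.
Proof.
  intros HU. rewrite space_integral_eq by lra.
  rewrite <- (Rmult_1_r U), <- (mass_conservation T), <- RInt_Rmult_l
    by (lra || ex_RInt_slice T T).
  apply RInt_le; [lra | ex_RInt_slice T T | ex_RInt_slice T T |].
  intros x Hx. rewrite (proj2 (initial_terminal x ltac:(split; lra))).
  apply Rmult_le_compat_r; [apply m_nonneg | apply HU]; lra.
Qed.

Lemma energy_bound U : (forall x, 0 <= x <= L -> uT x <= U) ->
  RInt (fun t => kinetic t) 0 T <= 4 * U / b_of eps + T.
Proof.
  intros HU. assert (Hb := b_of_pos eps Heps).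
  replace (RInt (fun t => kinetic t) 0 T) with (RInt kinetic_clamped 0 T).
  - apply Rmult_le_reg_l with (b_of eps); [exact Hb|].
    replace (b_of eps * (4 * U / b_of eps + T)) with (4 * U + b_of eps * T) by (field; lra).
    pose proof energy_growth. pose proof energy_initial_ge0. pose proof (energy_terminal_le U HU).
    lra.
  - apply RInt_ext. intros t Ht. rewrite Rmin_left, Rmax_right in Ht by lra.
    apply space_integral_eq; lra.
Qed.

Lemma mfg_solution_estimates U : (forall x, 0 <= x <= L -> uT x <= U) ->
  (forall t, in_cc 0 T t -> prob_density L (m t)) /\
  (forall t x, in_cc 0 T t -> in_cc 0 L x -> 0 <= u t x) /\
  RInt (fun t => RInt (fun x => m t x * (px u t x) ^ 2) 0 L) 0 T <= 4 * U / b_of eps + T.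
Proof.
  intros HU. split; [|split].
  - intros t Ht. split; [intros x Hx; now apply m_nonneg | now apply mass_conservation].
  - exact u_nonneg.
  - now apply energy_bound.
Qed.

End MFG.

Theorem proposition2p1 :
  forall (L T sigma r eps : R) (uT m0 : R -> R),
    0 < L -> 0 < T -> 0 < sigma -> 0 < r -> 0 < eps ->
    (exists gamma : R, 0 < gamma /\ C2gamma L gamma uT /\ C2gamma L gamma m0) ->
    Derive uT 0 = 0 -> Derive uT L = 0 ->
    m0 0 = 0 -> Derive m0 0 = 0 -> m0 L = 0 -> Derive m0 L = 0 ->
    prob_density L m0 ->
    (forall x, in_cc 0 L x -> 0 <= uT x) ->
    exists C : R, 0 < C /\
      forall u m : R -> R -> R,
        mfg_solution L T sigma r eps uT m0 u m ->
        (forall t, in_cc 0 T t -> prob_density L (m t)) /\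
        (forall t x, in_cc 0 T t -> in_cc 0 L x -> 0 <= u t x) /\
        RInt (fun t => RInt (fun x => m t x * (px u t x) ^ 2) 0 L) 0 T <= C.
Proof.
  intros L T sigma r eps uT m0 HL HT Hsigma Hr Heps [gamma [_ [HuT _]]] _ _ _ _ _ _
    Hm0 HuT_nonneg.
  destruct (continuity_ab_maj uT 0 L) as [xmax [Hmax Hxmax]]; [lra | |].
  { intros x Hx. apply continuity_pt_filterlim.
    apply (ex_derive_continuous (K := R_AbsRing) (V := R_NormedModule)), HuT, Hx. }
  assert (HU : 0 <= 4 * uT xmax / b_of eps).
  { apply Rmult_le_pos; [apply Rmult_le_pos; [lra | now apply HuT_nonneg] |].
    left. now apply Rinv_0_lt_compat, b_of_pos. }
  exists (4 * uT xmax / b_of eps + T). split; [lra |].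
  intros u m (Hu & Hm & HJB & HFP & Hinit & Hneumann & Hflux).
  now apply (mfg_solution_estimates L T sigma r eps uT m0 u m).
Qed.
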